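(* Let $G$ be a finite nilpotent group and $H$ an arbitrary finite group. If $P_e(G)\cong P_e(H)$, then $H$ is nilpotent.
   Context: All groups are finite. For a group $X$, the enhanced power graph $P_e(X)$ is the simple graph with vertex set $X$ in which two distinct vertices $x,y$ are adjacent if and only if the subgroup $\langle x,y\rangle$ is cyclic. *)

From mathcomp Require Import all_boot all_fingroup all_solvable.
Set Implicit Arguments. Unset Strict Implicit. Unset Printing Implicit Defensive.
Local Open Scope group_scope.

(* Adjacency in the enhanced power graph P_e(X) of a finite group X
   (vertex set = all elements of X, i.e. of the finGroupType gT):
   distinct x, y are adjacent iff <x, y> is cyclic. *)
Definition epg_adj (gT : finGroupType) (x y : gT) : bool :=
  (x != y) && cyclic <<[set x; y]>>.

Definition epg_isomorphic (gT hT : finGroupType) : Prop :=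
  exists f : gT -> hT, bijective f /\
    forall x y : gT, epg_adj x y = epg_adj (f x) (f y).

From mathcomp Require Import all_boot all_fingroup all_solvable.
Set Implicit Arguments. Unset Strict Implicit. Unset Printing Implicit Defensive.
Local Open Scope group_scope.

(* The closed neighbourhoods of P_e(X) determine, for each x, the set Cl(x) of
   those y whose closed neighbourhood contains that of x; Cl(x) is the
   intersection of the maximal cyclic subgroups containing x, hence a cyclic
   subgroup, and a graph isomorphism f maps Cl(x) onto Cl(f x).  A cyclic
   group of order n has exactly n_p p-elements, so f preserves the number of
   p-elements inside every Cl(x), and Moebius inversion over the poset of the
   Cl(x) transfers this to the whole group.  Hence H, like the nilpotent G, has
   exactly |H|_p p-elements for every p: each Sylow subgroup of H is the set of
   its p-elements, hence normal, and H is nilpotent. *)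

Section ClosureCount.

Variables (T : finType) (C : T -> {set T}).

Lemma card_closure_fibres (P : pred T) (A : {set T}) :
  #|[set y | P y & C y \subset A]| =
    \sum_(K : {set T} | K \subset A) #|[set y | P y & C y == K]|.
Proof.
rewrite cardsE -sum1_card (partition_big C (fun K => K \subset A)) => [|y /andP[] //].
apply: eq_bigr => K sKA; rewrite cardsE -sum1_card; apply: eq_bigl => y.
by rewrite !unfold_in; case: eqP => [-> | _]; rewrite ?sKA ?andbT ?andbF.
Qed.

Hypothesis C_refl : forall x, x \in C x.
Hypothesis C_trans : forall x y, y \in C x -> C y \subset C x.

Lemma mem_closureE x y : (y \in C x) = (C y \subset C x).
Proof. by apply/idP/idP => [/C_trans | /subsetP-> //]. Qed.

Lemma eq_card_closure_fibres (P1 P2 : pred T) :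
    (forall x, #|[set y in C x | P1 y]| = #|[set y in C x | P2 y]|) ->
  forall K, #|[set y | P1 y & C y == K]| = #|[set y | P2 y & C y == K]|.
Proof.
move=> eqC K; elim: {K}_.+1 {-2}K (ltnSn #|K|) => // n IHn K.
have [/existsP[x /eqP<-] ltxn | notC _] := boolP [exists x, C x == K]; last first.
  have fibre0 P : [set y | P y & C y == K] = set0.
    apply/setP => y; rewrite !inE; apply: contraNF notC => /andP[_ eqK].
    by apply/existsP; exists y.
  by rewrite !fibre0.
have card_closure P : #|[set y in C x | P y]| = #|[set y | P y & C y == C x]|
    + \sum_(L : {set T} | L \proper C x) #|[set y | P y & C y == L]|.
  have -> : [set y in C x | P y] = [set y | P y & C y \subset C x].
    by apply/setP => y; rewrite !inE mem_closureE andbC.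
  rewrite card_closure_fibres (bigD1 (C x)) //; congr (_ + _).
  by apply: eq_bigl => L; rewrite properEneq andbC.
have eq_proper_fibres : \sum_(L : {set T} | L \proper C x) #|[set y | P1 y & C y == L]|
    = \sum_(L : {set T} | L \proper C x) #|[set y | P2 y & C y == L]|.
  apply: eq_bigr => L ltL; apply: IHn.
  exact: leq_trans (proper_card ltL) ltxn.
by have := eqC x; rewrite !card_closure eq_proper_fibres => /addIn.
Qed.

Lemma eq_card_of_closures (P1 P2 : pred T) :
    (forall x, #|[set y in C x | P1 y]| = #|[set y in C x | P2 y]|) ->
  #|[set y | P1 y]| = #|[set y | P2 y]|.
Proof.
move=> eqC; have fullE P : [set y | P y] = [set y | P y & C y \subset setT].
  by apply/setP => y; rewrite !inE subsetT andbT.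
rewrite (fullE P1) (fullE P2) !card_closure_fibres.
by apply: eq_bigr => K _; apply: eq_card_closure_fibres.
Qed.

End ClosureCount.

Lemma card_setId_imset (aT rT : finType) (f : aT -> rT) (A : {set aT}) (P : pred rT) :
  injective f -> #|[set y in f @: A | P y]| = #|[set x in A | P (f x)]|.
Proof.
move=> f_inj; rewrite -(card_imset _ f_inj); apply: eq_card => y.
apply/setIdP/imsetP => [[/imsetP[x xA ->] Pfx] | [x /setIdP[xA Pfx] ->]].
  by exists x; rewrite ?inE ?xA.
by rewrite imset_f.
Qed.

Lemma nilpotent_card_p_eltP (gT : finGroupType) (G : {group gT}) :
  reflect (forall p : nat, #|[set x in G | p.-elt x]| = (#|G|`_p)%N) (nilpotent G).
Proof.
apply: (iffP idP) => [nilG p | cardG].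
  have hallP := nilpotent_pcore_Hall p nilG.
  rewrite -(card_Hall hallP); apply: eq_card => x; rewrite inE.
  have [xG | notxG] := boolP (x \in G).
    by rewrite (mem_normal_Hall hallP (pcore_normal _ _) xG).
  by apply/esym/negbTE; apply: contra notxG; apply: (subsetP (pcore_sub _ _)).
have sub_Fitting (P : {group gT}) : Sylow G P -> P \subset 'F(G).
  case/SylowP => [p _ sylP]; have pP := pHall_pgroup sylP.
  have defP : P :=: [set x in G | p.-elt x].
    apply/eqP; rewrite eqEcard cardG -(card_Hall sylP) leqnn andbT.
    apply/subsetP => x xP; rewrite inE (mem_p_elt pP xP) andbT.
    exact: subsetP (pHall_sub sylP) x xP.
  apply: Fitting_max (pgroup_nil pP); rewrite /normal (pHall_sub sylP) /=.
  apply/normsP => g gG; rewrite defP; apply/setP => x.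
  by rewrite mem_conjg !inE groupJr ?groupV // p_eltJ.
apply: nilpotentS (Fitting_nil G).
by rewrite -{1}(Sylow_gen G) gen_subG; apply/bigcupsP.
Qed.

Section EpgClosure.

Variable gT : finGroupType.
Implicit Types (x y z : gT) (M : {group gT}).

Definition epg_nbhd x : {set gT} := [set z | cyclic <<[set x; z]>>].

Definition epg_closure x : {set gT} := [set y | epg_nbhd x \subset epg_nbhd y].

Lemma epg_nbhdE x y : (y \in epg_nbhd x) = (x == y) || epg_adj x y.
Proof.
rewrite inE /epg_adj; have [<- | //] := eqVneq x y.
by rewrite setUid cycle_cyclic.
Qed.

Lemma epg_nbhd_refl x : x \in epg_nbhd x.
Proof. by rewrite epg_nbhdE eqxx. Qed.

Lemma epg_nbhd_sym x y : (y \in epg_nbhd x) = (x \in epg_nbhd y).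
Proof. by rewrite !inE setUC. Qed.

Lemma max_cyclic_epg_nbhd M m : [max M | cyclic M] -> M :=: <[m]> -> epg_nbhd m = M.
Proof.
move=> /maxgroupP[_ maxM] defM; apply/setP => y; rewrite inE.
have sMmy : M \subset <<[set m; y]>> by rewrite defM cycle_subG mem_gen // !inE eqxx.
apply/idP/idP => [cyc_my | yM].
  by rewrite -(maxM <<[set m; y]>>%G cyc_my sMmy) mem_gen // !inE eqxx orbT.
suff -> : <<[set m; y]>> = M by rewrite defM cycle_cyclic.
by apply/eqP; rewrite eqEsubset sMmy gen_subG subUset !sub1set yM defM cycle_id.
Qed.

Lemma max_cyclic_exists x z : z \in epg_nbhd x ->
  exists2 M, [max M | cyclic M] & (x \in M) && (z \in M).
Proof.
rewrite inE => cyc_xz.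
have [M maxM sM] := maxgroup_exists (gP := fun H : {group gT} => cyclic H) cyc_xz.
by exists M => //; rewrite !(subsetP sM) // mem_gen // !inE eqxx ?orbT.
Qed.

Lemma epg_closureP x y :
  reflect (forall M, [max M | cyclic M] -> x \in M -> y \in M) (y \in epg_closure x).
Proof.
rewrite inE; apply: (iffP subsetP) => [sNxy M maxM xM | inM z].
  have [m defM] := cyclicP (maxgroupp maxM).
  rewrite -(max_cyclic_epg_nbhd maxM defM) epg_nbhd_sym sNxy //.
  by rewrite epg_nbhd_sym (max_cyclic_epg_nbhd maxM defM).
move=> /max_cyclic_exists[M maxM /andP[xM zM]]; rewrite inE.
apply: cyclicS (maxgroupp maxM).
by rewrite gen_subG subUset !sub1set zM inM.
Qed.

Lemma epg_closure_refl x : x \in epg_closure x.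
Proof. by rewrite inE. Qed.

Lemma epg_closure_trans x y : y \in epg_closure x -> epg_closure y \subset epg_closure x.
Proof. by rewrite inE => sNxy; apply/subsetP => z; rewrite !inE; apply: subset_trans. Qed.

Lemma epg_closure_group_set x : group_set (epg_closure x).
Proof.
apply/group_setP; split; first by apply/epg_closureP => M _ _; apply: group1.
move=> y z /epg_closureP Cy /epg_closureP Cz; apply/epg_closureP => M maxM xM.
by rewrite groupM ?Cy ?Cz.
Qed.

Canonical epg_closure_group x := Group (epg_closure_group_set x).

Lemma cyclic_epg_closure x : cyclic (epg_closure x).
Proof.
have [M maxM /andP[xM _]] := max_cyclic_exists (epg_nbhd_refl x).
apply: cyclicS (maxgroupp maxM); apply/subsetP => y /epg_closureP; exact.
Qed.

Lemma card_p_elt_epg_closure x (p : nat) :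
  #|[set y in epg_closure x | p.-elt y]| = (#|epg_closure x|`_p)%N.
Proof.
by move: p; apply/nilpotent_card_p_eltP/abelian_nil/cyclic_abelian/cyclic_epg_closure.
Qed.

End EpgClosure.

Section EpgIsomorphism.

Variables (gT hT : finGroupType) (f : gT -> hT).
Hypothesis f_bij : bijective f.
Hypothesis f_adj : forall x y, epg_adj x y = epg_adj (f x) (f y).

Let f_inj : injective f := bij_inj f_bij.

Lemma epg_nbhd_bij x y : (f y \in epg_nbhd (f x)) = (y \in epg_nbhd x).
Proof. by rewrite !epg_nbhdE -f_adj (inj_eq f_inj). Qed.

Lemma epg_closure_bij x y : (f y \in epg_closure (f x)) = (y \in epg_closure x).
Proof.
have [g _ gK] := f_bij; rewrite !inE.
apply/subsetP/subsetP => sN z; first by rewrite -!(epg_nbhd_bij _ z); apply: sN.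
by rewrite -[z]gK !epg_nbhd_bij; apply: sN.
Qed.

Lemma imset_epg_closure x : f @: epg_closure x = epg_closure (f x).
Proof.
have [g _ gK] := f_bij; apply/setP => y.
by rewrite -[y]gK mem_imset // epg_closure_bij.
Qed.

Lemma card_p_elt_epg_closure_bij x (p : nat) :
  #|[set y in epg_closure x | p.-elt (f y)]| = #|[set y in epg_closure x | p.-elt y]|.
Proof.
rewrite -card_setId_imset // imset_epg_closure !card_p_elt_epg_closure.
by rewrite -imset_epg_closure card_imset.
Qed.

Lemma card_p_elt_epg_bij (p : nat) :
  #|[set y : hT | p.-elt y]| = #|[set x : gT | p.-elt x]|.
Proof.
have [g _ gK] := f_bij.
have imT : f @: [set: gT] = [set: hT].
  by apply/setP => y; rewrite inE -[y]gK imset_f ?inE.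
transitivity #|[set y in f @: [set: gT] | p.-elt y]|.
  by rewrite imT; apply: eq_card => y; rewrite !inE.
rewrite card_setId_imset //; transitivity #|[set x | p.-elt (f x)]|.
  by apply: eq_card => x; rewrite !inE.
apply: (eq_card_of_closures (@epg_closure_refl gT) (@epg_closure_trans gT)) => x.
exact: card_p_elt_epg_closure_bij.
Qed.

End EpgIsomorphism.

Theorem lemma1 (gT hT : finGroupType) :
  nilpotent [set: gT] -> epg_isomorphic gT hT -> nilpotent [set: hT].
Proof.
move=> /nilpotent_card_p_eltP card_gT [f [f_bij f_adj]].
apply/nilpotent_card_p_eltP => p.
rewrite setIdE setTI (card_p_elt_epg_bij f_bij f_adj) !cardsT -(bij_eq_card f_bij).
by rewrite -cardsT -card_gT setIdE setTI.
Qed.
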